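(* Let $S=(X,\iota(X),\tau(X,X'))$ be an array-based transition system, $\mathcal{P}$ a finite set of index predicates and $\hat S_{\mathcal{P}}$ its indexed predicate abstraction. For any sentences $F(X_{\mathcal{P}})$ and $\psi(X_{\mathcal{P}})$ over $\Sigma_I\cup X_{\mathcal{P}}$, the formula $$AbsRelInd(F,\tau,\psi,\mathcal{P}):=F(X_{\mathcal{P}})\wedge\psi(X_{\mathcal{P}})\wedge H_{\mathcal{P}}(X_{\mathcal{P}},X)\wedge EQ_{\mathcal{P}}(X,\bar X)\wedge\tau(\bar X,\bar X')\wedge EQ_{\mathcal{P}}(\bar X',X')\wedge\neg\psi(X'_{\mathcal{P}})\wedge H_{\mathcal{P}}(X'_{\mathcal{P}},X')$$ (where $\bar X,\bar X'$ are fresh copies of the array symbols) and the formula $F(X_{\mathcal{P}})\wedge\hat\tau(X_{\mathcal{P}},X'_{\mathcal{P}})\wedge\psi(X_{\mathcal{P}})\wedge\neg\psi(X'_{\mathcal{P}})$ are equisatisfiable. Moreover, if a model $\mathcal{M}$ with states $s,s'$ satisfies $AbsRelInd(F,\tau,\psi,\mathcal{P})$, then the abstract states $\hat s_{\mathcal{P}},\hat s'_{\mathcal{P}}$ (over $\mathcal{M}_{|I}$) satisfy $F(X_{\mathcal{P}})\wedge\hat\tau(X_{\mathcal{P}},X'_{\mathcal{P}})\wedge\psi(X_{\mathcal{P}})\wedge\neg\psi(X'_{\mathcal{P}})$.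
   Context: Setting: index theory $\mathcal{T}_I$ (signature $\Sigma_I$, all models with finite universes), element theory $\mathcal{T}_E$, and the combined theory $A^E_I$ in which array-sort symbols denote total functions from the index universe to the element universe and $x[i]$ is application. An array-based transition system $S=(X,\iota(X),\tau(X,X'))$ has a finite set $X$ of array symbols and formulas $\iota,\tau$ quantifying only over the index sort. Fix index variables $I$ and a finite set $\mathcal{P}(I)$ of atoms $p(I,X)$; for each $p$ a fresh index-sort predicate symbol $x_p$ (arity = number of free index variables of $p$), forming $X_{\mathcal{P}}$. Define $H_{\mathcal{P}}(X_{\mathcal{P}},X):=\forall I.\bigwedge_{p\in\mathcal{P}}(x_p(I)\leftrightarrow p(I,X))$ and $EQ_{\mathcal{P}}(X,X'):=\forall I.\bigwedge_{p\in\mathcal{P}}(p(I,X)\leftrightarrow p(I,X'))$. The abstract transition is $\hat\tau(X_{\mathcal{P}},X'_{\mathcal{P}}):=\exists X,X'.(\tau(X,X')\wedge H_{\mathcal{P}}(X_{\mathcal{P}},X)\wedge H_{\mathcal{P}}(X'_{\mathcal{P}},X'))$ (existence of array valuations in a model of $A^E_I$ with the given index part). For a model $\mathcal{M}$ of $A^E_I$ with index restriction $\mathcal{M}_{|I}$ and a valuation $s$ of $X$, $\hat s_{\mathcal{P}}$ is the interpretation of $X_{\mathcal{P}}$ over $\mathcal{M}_{|I}$ given by $\hat s_{\mathcal{P}}(x_p)=\{\underline m\mid \mathcal{M},s\models p(\underline m,X)\}$. *)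

From mathcomp Require Import all_boot.

Set Implicit Arguments.
Unset Strict Implicit.
Unset Printing Implicit Defensive.

Record IndexTheory := {
  istruct : Type;
  icar : istruct -> Type;
  imodel : istruct -> Prop;
  imodel_finite : forall MI, imodel MI ->
    exists n (f : 'I_n -> icar MI), forall x, exists i, f i = x
}.

Record ElemTheory := {
  estruct : Type;
  ecar : estruct -> Type;
  emodel : estruct -> Prop
}.

(* A model of A^E_I: an index part (model of T_I) and an element part (model
   of T_E); array sorts denote ALL total functions from the index universe to
   the element universe, and x[i] is function application. *)
Record AModel (TI : IndexTheory) (TE : ElemTheory) := mkAModel {
  mI : istruct TI;
  mE : estruct TE;
  mI_ok : imodel mI;
  mE_ok : emodel mE
}.

Section ArraySetting.
Variables (TI : IndexTheory) (TE : ElemTheory).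

Definition ArrVal (X : Type) (M : AModel TI TE) :=
  X -> icar (mI M) -> ecar (mE M).

Record ATS := {
  asym : finType;
  ainit : forall M : AModel TI TE, ArrVal asym M -> Prop;
  atrans : forall M : AModel TI TE, ArrVal asym M -> ArrVal asym M -> Prop
}.

(* A finite set P of index atoms p(I,X); each p has a number (arity p) of
   free index variables, and patom M s p m is the truth value of p at the
   index tuple m, in the model M under array valuation s. *)
Record IndexPreds (X : Type) := {
  pidx : finType;
  parity : pidx -> nat;
  patom : forall M : AModel TI TE, ArrVal X M ->
            forall p : pidx, ('I_(parity p) -> icar (mI M)) -> bool
}.

Variables (S : ATS) (P : IndexPreds (asym S)).

(* Interpretations of the fresh index-sort predicate symbols X_P over an
   index structure MI: x_p is a relation of arity (parity p). *)
Definition AbsVal (MI : istruct TI) :=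
  forall p : pidx P, ('I_(parity p) -> icar MI) -> bool.

Definition IdxSentence := forall MI : istruct TI, AbsVal MI -> Prop.

Definition HP (M : AModel TI TE) (xP : AbsVal (mI M)) (s : ArrVal (asym S) M) :=
  forall (p : pidx P) (m : 'I_(parity p) -> icar (mI M)),
    xP p m = @patom _ P M s p m.

Definition EQP (M : AModel TI TE) (s t : ArrVal (asym S) M) :=
  forall (p : pidx P) (m : 'I_(parity p) -> icar (mI M)),
    @patom _ P M s p m = @patom _ P M t p m.

Definition hatP (M : AModel TI TE) (s : ArrVal (asym S) M) : AbsVal (mI M) :=
  fun p m => @patom _ P M s p m.

Definition tauhat (MI : istruct TI) (xP xP' : AbsVal MI) : Prop :=
  exists (hI : imodel MI) (ME : estruct TE) (hE : emodel ME),
    exists s s' : ArrVal (asym S) (mkAModel hI hE),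
      @atrans S (mkAModel hI hE) s s' /\
      HP (M := mkAModel hI hE) xP s /\ HP (M := mkAModel hI hE) xP' s'.

Definition AbsRelInd (F psi : IdxSentence) (M : AModel TI TE)
    (xP xP' : AbsVal (mI M)) (s sb sb' s' : ArrVal (asym S) M) : Prop :=
  F (mI M) xP /\ psi (mI M) xP /\ HP xP s /\ EQP s sb /\
  @atrans S M sb sb' /\ EQP sb' s' /\ ~ psi (mI M) xP' /\ HP xP' s'.

Definition AbsRelInd_sat (F psi : IdxSentence) : Prop :=
  exists (M : AModel TI TE) (xP xP' : AbsVal (mI M))
         (s sb sb' s' : ArrVal (asym S) M),
    AbsRelInd F psi xP xP' s sb sb' s'.

Definition AbsFormula (F psi : IdxSentence) (MI : istruct TI)
    (xP xP' : AbsVal MI) : Prop :=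
  F MI xP /\ tauhat xP xP' /\ psi MI xP /\ ~ psi MI xP'.

Definition AbsFormula_sat (F psi : IdxSentence) : Prop :=
  exists (MI : istruct TI), imodel MI /\
    exists xP xP' : AbsVal MI, AbsFormula F psi xP xP'.

End ArraySetting.

From mathcomp Require Import all_boot.
From Stdlib Require Import FunctionalExtensionality.

(* H_P forces the predicate variables to be the abstraction of the state, and
   EQ_P lets the transition be taken on copies with the same abstraction, so a
   model of AbsRelInd yields an abstract transition between hat s and hat s'.
   Conversely, the array witnesses of an abstract transition, used for both X
   and its copy, give a model of AbsRelInd. *)

Set Implicit Arguments.
Unset Strict Implicit.
Unset Printing Implicit Defensive.

Section Abstraction.
Variables (TI : IndexTheory) (TE : ElemTheory) (S : ATS TI TE).
Variable P : IndexPreds TI TE (asym S).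

Lemma HP_eq_hatP (M : AModel TI TE) (xP : AbsVal P (mI M))
    (s : ArrVal (asym S) M) :
  HP xP s -> xP = hatP s.
Proof.
move=> HxP; apply: functional_extensionality_dep => p.
by apply: functional_extensionality => m; exact: HxP.
Qed.

Lemma EQP_refl (M : AModel TI TE) (s : ArrVal (asym S) M) : EQP P s s.
Proof. by []. Qed.

Lemma tauhat_of_HP_EQP (M : AModel TI TE) (xP xP' : AbsVal P (mI M))
    (s sb sb' s' : ArrVal (asym S) M) :
  HP xP s -> EQP P s sb -> atrans sb sb' -> EQP P sb' s' -> HP xP' s' ->
  tauhat xP xP'.
Proof.
case: M xP xP' s sb sb' s' => MI ME hI hE xP xP' s sb sb' s' HxP Hs Htr Hs' HxP'.
exists hI, ME, hE, sb, sb'; split; first exact: Htr.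
by split=> p m; rewrite ?HxP ?Hs ?HxP' ?Hs'.
Qed.

Variables F psi : IdxSentence P.

Lemma AbsRelInd_hatP (M : AModel TI TE) (xP xP' : AbsVal P (mI M))
    (s sb sb' s' : ArrVal (asym S) M) :
  AbsRelInd F psi xP xP' s sb sb' s' ->
  AbsFormula F psi (hatP s) (hatP s').
Proof.
move=> [HF [Hpsi [HxP [Hs [Htr [Hs' [Hpsi' HxP']]]]]]].
have Htau := tauhat_of_HP_EQP HxP Hs Htr Hs' HxP'.
by rewrite -(HP_eq_hatP HxP) -(HP_eq_hatP HxP').
Qed.

Lemma AbsFormula_AbsRelInd_sat (MI : istruct TI) (xP xP' : AbsVal P MI) :
  AbsFormula F psi xP xP' -> AbsRelInd_sat F psi.
Proof.
move=> [HF [[hI [ME [hE [s [s' [Htr [HxP HxP']]]]]]] [Hpsi Hpsi']]].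
exists (mkAModel hI hE), xP, xP', s, s, s', s'.
by do !split => //; exact: EQP_refl.
Qed.

End Abstraction.

Theorem mainTheorem2 (TI : IndexTheory) (TE : ElemTheory) (S : ATS TI TE)
    (P : IndexPreds TI TE (asym S)) (F psi : IdxSentence P) :
  (AbsRelInd_sat F psi <-> AbsFormula_sat F psi) /\
  (forall (M : AModel TI TE) (xP xP' : AbsVal P (mI M))
          (s sb sb' s' : ArrVal (asym S) M),
     AbsRelInd F psi xP xP' s sb sb' s' ->
     AbsFormula F psi (hatP s) (hatP s')).
Proof.
split; last exact: AbsRelInd_hatP.
split.
- move=> [M [xP [xP' [s [sb [sb' [s' H]]]]]]].
  exists (mI M); split; first exact: mI_ok.
  by exists (hatP s), (hatP s'); exact: AbsRelInd_hatP H.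
- move=> [MI [_ [xP [xP' H]]]].
  exact: AbsFormula_AbsRelInd_sat H.
Qed.
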